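(* Let $f$ be a critically coalescing quadratic rational map with critical values $v_1,v_2$. Set $\beta_j=f^j(v_1)$ for $j\ge1$ (so $\beta_1=f(v_1)=f(v_2)$), and suppose that the forward orbit of $v_1$ contains a fixed point $\alpha$ of $f$; let $m$ be minimal with $f^m(v_1)=\alpha$, and assume $m>2$. Let $k>m$. Then, counting critical points of $f^k$ lying in fibers $f^{-k}(z)$: (i) $f^{-k}(z)$ contains exactly $2^{k-1}$ critical points of $f^k$ if and only if $z\in\{v_1,v_2,\beta_1\}$; (ii) for each $2\le j\le m-1$, $f^{-k}(\beta_j)$ contains exactly $2^{k-j}$ critical points of $f^k$; (iii) $f^{-k}(\alpha)$ contains exactly $2^{k-(m-1)}-2$ critical points of $f^k$.
   Context: A quadratic rational map with critical values $v_1\ne v_2$ is critically coalescing if $f(v_1)=f(v_2)$. $f^k$ denotes the $k$-th iterate and $f^{-k}(z)$ the full preimage of $z$ under $f^k$. *)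

From HB Require Import structures.
From mathcomp Require Import all_boot all_order all_algebra.
From mathcomp Require Import complex.
From mathcomp Require Import reals.
Set Implicit Arguments. Unset Strict Implicit. Unset Printing Implicit Defensive.
Import Order.TTheory GRing.Theory Num.Theory.
Local Open Scope ring_scope.

Section Sphere.
Variable C : fieldType.

(* Points of the projective line P^1(C): Some x = x, None = infinity. *)
Definition sphere := option C.

Definition hcoord (z : sphere) : C * C :=
  match z with Some x => (x, 1) | None => (1, 0) end.

(* A rational map of degree d given by a pair of binary forms
   P(X,Y) = sum_{i<=d} p_i X^i Y^(d-i), Q(X,Y) = sum_{i<=d} q_i X^i Y^(d-i),
   encoded by the univariate polynomials p, q (dehomogenisations) and d. *)
Record hmap := HMap { hdeg : nat; hnum : {poly C}; hden : {poly C} }.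

Definition hform (d : nat) (p : {poly C}) (a b : C) : C :=
  \sum_(i < d.+1) p`_i * a ^+ i * b ^+ (d - i).
Definition hform_dX (d : nat) (p : {poly C}) (a b : C) : C :=
  \sum_(i < d.+1) (p`_i *+ i) * a ^+ i.-1 * b ^+ (d - i).
Definition hform_dY (d : nat) (p : {poly C}) (a b : C) : C :=
  \sum_(i < d.+1) (p`_i *+ (d - i)) * a ^+ i * b ^+ (d - i).-1.

Definition is_ratmap (f : hmap) : Prop :=
  [/\ (size (hnum f) <= (hdeg f).+1)%N, (size (hden f) <= (hdeg f).+1)%N &
      forall z : sphere,
        (hform (hdeg f) (hnum f) (hcoord z).1 (hcoord z).2,
         hform (hdeg f) (hden f) (hcoord z).1 (hcoord z).2) <> (0, 0)].

Definition is_quadratic (f : hmap) : Prop := hdeg f = 2%N /\ is_ratmap f.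

Definition heval (f : hmap) (z : sphere) : sphere :=
  let a := (hcoord z).1 in let b := (hcoord z).2 in
  let A := hform (hdeg f) (hnum f) a b in
  let B := hform (hdeg f) (hden f) a b in
  if B == 0 then None else Some (A / B).

(* z is a critical point of f: the Jacobian determinant of the homogeneous
   lift (P,Q) vanishes at the homogeneous coordinates of z. *)
Definition critical (f : hmap) (z : sphere) : Prop :=
  let a := (hcoord z).1 in let b := (hcoord z).2 in
  let d := hdeg f in
  hform_dX d (hnum f) a b * hform_dY d (hden f) a b
  - hform_dY d (hnum f) a b * hform_dX d (hden f) a b = 0.

(* Composition f o g of homogeneous lifts: (P(R,S), Q(R,S)). *)
Definition hcomp (f g : hmap) : hmap :=
  HMap (hdeg f * hdeg g)
    (\sum_(i < (hdeg f).+1) (hnum f)`_i *: (hnum g ^+ i * hden g ^+ (hdeg f - i)))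
    (\sum_(i < (hdeg f).+1) (hden f)`_i *: (hnum g ^+ i * hden g ^+ (hdeg f - i))).

Definition hid : hmap := HMap 1 'X 1.

Definition hiter (k : nat) (f : hmap) : hmap := iter k (hcomp f) hid.

End Sphere.

Definition has_exactly (T : eqType) (n : nat) (P : T -> Prop) : Prop :=
  exists s : seq T, [/\ uniq s, size s = n & forall x, P x <-> x \in s].

From HB Require Import structures.
From mathcomp Require Import all_boot all_order all_algebra.
From mathcomp Require Import complex.
From mathcomp Require Import reals.
From mathcomp Require Import ring zify.
Import Order.TTheory GRing.Theory Num.Theory.
Set Implicit Arguments. Unset Strict Implicit. Unset Printing Implicit Defensive.
Local Open Scope ring_scope.

(* A quadratic rational map f is a two-sheeted branched cover of the sphere: the
   fiber of f through z is {z, deck z}, where deck fixes exactly the two critical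
   points c1 and c2.  By the chain rule, x is critical for f^k iff f^i(x) is a
   critical point for some i < k.  Since the orbits of the critical values never
   come back to a critical point, this time i and the critical point c are unique,
   so the critical points of f^k over y are the disjoint union, over the pairs
   (i, c) with f^(k-i)(c) = y, of the fibers f^-i(c), each of which has 2^i points.
   Counting these pairs for y on the orbit v1, beta_1, ..., beta_m = alpha gives
   the three formulas. *)

Section HomogeneousForms.
Variable C : fieldType.
Implicit Types (p q R S U V : {poly C}) (a b l : C).

Lemma hform0 n a b : hform n (0 : {poly C}) a b = 0.
Proof. by rewrite /hform big1 // => i _; rewrite coef0 !mul0r. Qed.

Lemma hformD n p q a b : hform n (p + q) a b = hform n p a b + hform n q a b.
Proof. by rewrite /hform -big_split /=; apply: eq_bigr => i _; rewrite coefD !mulrDl. Qed.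

Lemma hformZ n c p a b : hform n (c *: p) a b = c * hform n p a b.
Proof. by rewrite /hform mulr_sumr; apply: eq_bigr => i _; rewrite coefZ !mulrA. Qed.

Lemma hform_sum n I (r : seq I) (P : pred I) (F : I -> {poly C}) a b :
  hform n (\sum_(i <- r | P i) F i) a b = \sum_(i <- r | P i) hform n (F i) a b.
Proof.
by apply: (big_morph (fun p => hform n p a b)) => [x y|]; rewrite ?hformD ?hform0.
Qed.

Lemma hformXn n i a b : (i <= n)%N -> hform n 'X^i a b = a ^+ i * b ^+ (n - i).
Proof.
move=> hi; rewrite /hform (bigD1 (Ordinal (hi : (i < n.+1)%N))) //= big1 ?addr0.
  by rewrite coefXn eqxx mul1r.
move=> j /eqP neq_ji; rewrite coefXn; case: eqP => [eq_ji|_]; last by rewrite !mul0r.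
by case: neq_ji; apply: val_inj.
Qed.

Lemma hform_expand n p a b : (size p <= n.+1)%N ->
  hform n p a b = \sum_(i < size p) p`_i * (a ^+ i * b ^+ (n - i)).
Proof.
move=> hs; rewrite -{1}[p]coefK poly_def hform_sum; apply: eq_bigr => i _.
by rewrite hformZ hformXn //; have := ltn_ord i; lia.
Qed.

Lemma size_exp_le n i U : (size U <= n.+1)%N -> (size (U ^+ i) <= (n * i).+1)%N.
Proof.
move=> hU; apply: leq_trans (size_poly_exp_leq _ _) _.
by rewrite ltnS leq_mul2r; apply/orP; right; rewrite -ltnS; case: (size U) hU.
Qed.

Lemma size_mul_le n1 n2 U V : (size U <= n1.+1)%N -> (size V <= n2.+1)%N ->
  (size (U * V)%R <= (n1 + n2).+1)%N.
Proof.
move=> hU hV; apply: leq_trans (size_polyMleq _ _) _.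
case: (size U) hU => [|u] hU; case: (size V) hV => [|v] hV //=; lia.
Qed.

Lemma hformM n1 n2 U V a b : (size U <= n1.+1)%N -> (size V <= n2.+1)%N ->
  hform (n1 + n2) (U * V) a b = hform n1 U a b * hform n2 V a b.
Proof.
move=> hU hV; rewrite (hform_expand _ _ hU) (hform_expand _ _ hV).
rewrite -{1}[U]coefK -{1}[V]coefK !poly_def mulr_suml hform_sum mulr_suml.
apply: eq_bigr => i _; rewrite mulr_sumr hform_sum mulr_sumr; apply: eq_bigr => j _.
have := ltn_ord i; have := ltn_ord j => hj hi.
rewrite -scalerAl -scalerAr scalerA -exprD hformZ hformXn; last by lia.
have -> : (n1 + n2 - (i + j) = (n1 - i) + (n2 - j))%N by lia.
by rewrite !exprD; ring.
Qed.

Lemma hformX n i U a b : (size U <= n.+1)%N ->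
  hform (n * i) (U ^+ i) a b = hform n U a b ^+ i.
Proof.
move=> hU; elim: i => [|i IH].
  by rewrite expr0 muln0 /hform big_ord1 coef1 /= !expr0 !mulr1.
by rewrite exprSr mulnSr hformM ?IH ?exprSr // size_exp_le.
Qed.

Lemma hform_scale n p l a b : hform n p (l * a) (l * b) = l ^+ n * hform n p a b.
Proof.
rewrite /hform mulr_sumr; apply: eq_bigr => i _.
have hi : (i <= n)%N by rewrite -ltnS.
by rewrite !exprMn -[in l ^+ n](subnKC hi) exprD; ring.
Qed.

(* The dehomogenisation of the form q(R, S) of degree n * d, for forms R, S of
   degree d; [hcomp] is built from it. *)
Definition hsubst n q R S : {poly C} :=
  \sum_(i < n.+1) q`_i *: (R ^+ i * S ^+ (n - i)).

Lemma size_hsubst n q d R S : (size R <= d.+1)%N -> (size S <= d.+1)%N ->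
  (size (hsubst n q R S) <= (n * d).+1)%N.
Proof.
move=> hR hS; apply: leq_trans (size_sum _ _ _) _; apply/bigmax_leqP => i _.
apply: leq_trans (size_scale_leq _ _) _.
have := size_mul_le (size_exp_le i hR) (size_exp_le (n - i) hS).
by have -> : (d * i + d * (n - i) = n * d)%N by have := ltn_ord i; nia.
Qed.

Lemma hform_hsubst n q d R S a b : (size R <= d.+1)%N -> (size S <= d.+1)%N ->
  hform (n * d) (hsubst n q R S) a b = hform n q (hform d R a b) (hform d S a b).
Proof.
move=> hR hS; rewrite /hsubst hform_sum [RHS]/hform; apply: eq_bigr => i _.
have -> : (n * d = d * i + d * (n - i))%N by have := ltn_ord i; nia.
by rewrite hformZ hformM ?size_exp_le // !hformX // mulrA.
Qed.

(* The Y-partial derivative of the binary form of degree d attached to p,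
   dehomogenised: by Euler's identity it is d p - X p'. *)
Definition dehom_dY d p := p *+ d - 'X * p^`().

Lemma coef_dehom_dY d p i : (i <= d)%N -> (dehom_dY d p)`_i = p`_i *+ (d - i).
Proof.
move=> hi; rewrite coefB coefMn coefXM; case: i hi => [|i] hi.
  by rewrite subr0 subn0.
by rewrite coef_deriv /= mulrnBr.
Qed.

Lemma size_deriv_le d R : (size R <= d.+1)%N -> (size R^`() <= d)%N.
Proof.
by move=> /leq_sizeP hR; apply/leq_sizeP => j hj; rewrite coef_deriv hR ?mul0rn.
Qed.

Lemma size_dehom_dY_le d R : (size R <= d.+1)%N -> (size (dehom_dY d R) <= d)%N.
Proof.
move=> /leq_sizeP hR; apply/leq_sizeP => j hj.
case: (ltngtP j d) hj => // [hj|->] _; last by rewrite coef_dehom_dY // subnn mulr0n.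
rewrite coefB coefMn coefXM hR // mul0rn; case: j hj => [//|j] hj.
by rewrite coef_deriv /= hR // mul0rn subr0.
Qed.

Lemma hform_dXE d p a b : (0 < d)%N -> hform_dX d p a b = hform d.-1 p^`() a b.
Proof.
case: d => [//|d] _; rewrite /hform_dX /hform big_ord_recl /= mulr0n !mul0r add0r.
by apply: eq_bigr => i _; rewrite coef_deriv /bump /= add1n subSS.
Qed.

Lemma hform_dYE d p a b : (0 < d)%N ->
  hform_dY d p a b = hform d.-1 (dehom_dY d p) a b.
Proof.
case: d => [//|d] _; rewrite /hform_dY /hform big_ord_recr /= subnn mulr0n !mul0r addr0.
apply: eq_bigr => i _; rewrite coef_dehom_dY /=; last exact: ltnW.
by have hi := ltn_ord i; congr (_ * _); congr (_ ^+ _); lia.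
Qed.

Lemma deriv_hsubst n q R S : (0 < n)%N ->
  (hsubst n q R S)^`() = hsubst n.-1 q^`() R S * R^`()
                         + hsubst n.-1 (dehom_dY n q) R S * S^`().
Proof.
case: n => [//|n] _ /=; rewrite /hsubst raddf_sum /=.
under eq_bigr => i _ do rewrite derivZ derivM !deriv_exp scalerDr.
rewrite big_split /= !mulr_suml; congr (_ + _).
  rewrite big_ord_recl /= mulr0n mul0r ?mul0r scaler0 add0r.
  apply: eq_bigr => i _; rewrite coef_deriv /bump /= add1n subSS.
  by rewrite -!mul_polyC polyCMn; ring.
rewrite big_ord_recr /= subnn mulr0n mulr0 scaler0 addr0.
apply: eq_bigr => i _; rewrite coef_dehom_dY /=; last exact: ltnW.
have -> : ((n.+1 - i).-1 = n - i)%N by have := ltn_ord i; lia.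
by rewrite -!mul_polyC polyCMn; ring.
Qed.

Lemma euler_hsubst n q R S : (0 < n)%N ->
  hsubst n q R S *+ n = hsubst n.-1 q^`() R S * R
                        + hsubst n.-1 (dehom_dY n q) R S * S.
Proof.
case: n => [//|n] _ /=; rewrite /hsubst -sumrMnl !mulr_suml.
have -> : \sum_(i < n.+2) q`_i *: (R ^+ i * S ^+ (n.+1 - i)) *+ n.+1 =
  \sum_(i < n.+2) (q`_i *: (R ^+ i * S ^+ (n.+1 - i)) *+ i
                  + q`_i *: (R ^+ i * S ^+ (n.+1 - i)) *+ (n.+1 - i)).
  apply: eq_bigr => i _; rewrite -mulrnDr; congr (_ *+ _).
  by have := ltn_ord i; lia.
rewrite big_split /=; congr (_ + _).
  rewrite big_ord_recl /= mulr0n add0r.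
  apply: eq_bigr => i _; rewrite coef_deriv /bump /= add1n subSS.
  by rewrite -!mul_polyC polyCMn exprSr; ring.
rewrite big_ord_recr /= subnn mulr0n addr0.
apply: eq_bigr => i _; rewrite coef_dehom_dY /=; last exact: ltnW.
have -> : (n.+1 - i = (n - i).+1)%N by have := ltn_ord i; lia.
by rewrite -!mul_polyC polyCMn exprS; ring.
Qed.

Lemma hform_dX_hsubst df dg p R S a b : (0 < df)%N -> (0 < dg)%N ->
  (size R <= dg.+1)%N -> (size S <= dg.+1)%N ->
  hform_dX (df * dg) (hsubst df p R S) a b =
  hform_dX df p (hform dg R a b) (hform dg S a b) * hform_dX dg R a b +
  hform_dY df p (hform dg R a b) (hform dg S a b) * hform_dX dg S a b.
Proof.
case: df => [//|df] _; case: dg => [//|dg] _ hR hS.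
rewrite hform_dXE // deriv_hsubst // hformD.
have -> : ((df.+1 * dg.+1).-1 = df * dg.+1 + dg)%N by rewrite mulSn /=; lia.
rewrite !hformM ?size_hsubst ?size_deriv_le // !hform_hsubst //.
by rewrite !hform_dXE // hform_dYE.
Qed.

Lemma hform_dY_hsubst df dg p R S a b : (0 < df)%N -> (0 < dg)%N ->
  (size R <= dg.+1)%N -> (size S <= dg.+1)%N ->
  hform_dY (df * dg) (hsubst df p R S) a b =
  hform_dX df p (hform dg R a b) (hform dg S a b) * hform_dY dg R a b +
  hform_dY df p (hform dg R a b) (hform dg S a b) * hform_dY dg S a b.
Proof.
case: df => [//|df] _; case: dg => [//|dg] _ hR hS.
rewrite hform_dYE //.
have -> : dehom_dY (df.+1 * dg.+1) (hsubst df.+1 p R S) =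
  hsubst df p^`() R S * dehom_dY dg.+1 R +
  hsubst df (dehom_dY df.+1 p) R S * dehom_dY dg.+1 S.
  rewrite /dehom_dY mulrnA euler_hsubst // deriv_hsubst //=.
  by rewrite !mulrnDl -!mulrnAr; ring.
rewrite hformD.
have -> : ((df.+1 * dg.+1).-1 = df * dg.+1 + dg)%N by rewrite mulSn /=; lia.
rewrite !hformM ?size_hsubst ?size_dehom_dY_le // !hform_hsubst //.
by rewrite !hform_dYE // hform_dXE.
Qed.

End HomogeneousForms.

Section RationalMaps.
Variable C : fieldType.
Implicit Types (p q : {poly C}) (a b A B l : C) (f g : hmap C) (z : sphere C).

Definition hjac d p q a b :=
  hform_dX d p a b * hform_dY d q a b - hform_dY d p a b * hform_dX d q a b.

Lemma criticalE f z :
  critical f z <-> hjac (hdeg f) (hnum f) (hden f) (hcoord z).1 (hcoord z).2 = 0.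
Proof. by []. Qed.

Lemma hdeg_hcomp f g : hdeg (hcomp f g) = (hdeg f * hdeg g)%N.
Proof. by []. Qed.

Lemma hnum_hcomp f g : hnum (hcomp f g) = hsubst (hdeg f) (hnum f) (hnum g) (hden g).
Proof. by []. Qed.

Lemma hden_hcomp f g : hden (hcomp f g) = hsubst (hdeg f) (hden f) (hnum g) (hden g).
Proof. by []. Qed.

Lemma hjac_hcomp f g a b : (0 < hdeg f)%N -> (0 < hdeg g)%N -> is_ratmap g ->
  hjac (hdeg (hcomp f g)) (hnum (hcomp f g)) (hden (hcomp f g)) a b =
  hjac (hdeg f) (hnum f) (hden f)
       (hform (hdeg g) (hnum g) a b) (hform (hdeg g) (hden g) a b)
  * hjac (hdeg g) (hnum g) (hden g) a b.
Proof.
move=> df_gt0 dg_gt0 [szR szS _].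
rewrite /hjac hdeg_hcomp hnum_hcomp hden_hcomp.
by rewrite !hform_dX_hsubst // !hform_dY_hsubst //; ring.
Qed.

Lemma hjac_scale d p q l a b : (0 < d)%N ->
  hjac d p q (l * a) (l * b) = l ^+ (d.-1 + d.-1) * hjac d p q a b.
Proof.
by move=> d_gt0; rewrite /hjac !hform_dXE // !hform_dYE // !hform_scale exprD; ring.
Qed.

(* The point with homogeneous coordinates (A : B); the excluded pair (0, 0) is
   sent to infinity. *)
Definition hpoint A B : sphere C := if B == 0 then None else Some (A / B).

Lemma hevalE f z : heval f z =
  hpoint (hform (hdeg f) (hnum f) (hcoord z).1 (hcoord z).2)
         (hform (hdeg f) (hden f) (hcoord z).1 (hcoord z).2).
Proof. by []. Qed.

Lemma hpoint_hcoord z : hpoint (hcoord z).1 (hcoord z).2 = z.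
Proof. by case: z => [x|] /=; rewrite /hpoint ?oner_eq0 ?eqxx ?divr1. Qed.

Lemma hcoord_neq0 z : ((hcoord z).1, (hcoord z).2) <> (0, 0).
Proof. by case: z => [x|] /= [] => [_ /eqP|/eqP]; rewrite oner_eq0. Qed.

Lemma hcoord_hpoint A B : (A, B) <> (0, 0) -> exists2 l, l != 0 &
  A = l * (hcoord (hpoint A B)).1 /\ B = l * (hcoord (hpoint A B)).2.
Proof.
move=> AB_neq0; rewrite /hpoint; case: eqP => B0 /=.
  exists A; last by rewrite mulr1 mulr0.
  by apply/eqP => A0; apply: AB_neq0; rewrite A0 B0.
by exists B; [apply/eqP|rewrite mulr1 mulrC divfK //; apply/eqP].
Qed.

Lemma hpointZ l A B : l != 0 -> hpoint (l * A) (l * B) = hpoint A B.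
Proof.
move=> l_neq0; rewrite /hpoint mulf_eq0 (negbTE l_neq0) /=; case: eqP => // _.
by rewrite invfM mulrACA divff // mul1r.
Qed.

Lemma hform_hpoint A B : (A, B) <> (0, 0) -> exists2 l, l != 0 & forall n p,
  hform n p A B = l ^+ n * hform n p (hcoord (hpoint A B)).1 (hcoord (hpoint A B)).2.
Proof.
move=> /hcoord_hpoint [l l_neq0 [eA eB]]; exists l => // n p.
by rewrite -hform_scale -eA -eB.
Qed.

Lemma hjac_hpoint d p q A B : (0 < d)%N -> (A, B) <> (0, 0) ->
  hjac d p q A B = 0 <->
  hjac d p q (hcoord (hpoint A B)).1 (hcoord (hpoint A B)).2 = 0.
Proof.
move=> d_gt0 /hcoord_hpoint [l l_neq0 [eA eB]].
rewrite {1}eB {1}eA hjac_scale //; split => [/eqP|->]; last by rewrite mulr0.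
by rewrite mulf_eq0 expf_eq0 (negbTE l_neq0) andbF => /eqP.
Qed.

Lemma heval_hpoint f A B : (A, B) <> (0, 0) ->
  hpoint (hform (hdeg f) (hnum f) A B) (hform (hdeg f) (hden f) A B) =
  heval f (hpoint A B).
Proof. by move=> /hform_hpoint [l l_neq0 eAB]; rewrite !eAB hpointZ ?expf_neq0. Qed.

Lemma hform_hcomp f g p z : is_ratmap g ->
  hform (hdeg f * hdeg g) (hsubst (hdeg f) p (hnum g) (hden g)) (hcoord z).1 (hcoord z).2 =
  hform (hdeg f) p (hform (hdeg g) (hnum g) (hcoord z).1 (hcoord z).2)
                   (hform (hdeg g) (hden g) (hcoord z).1 (hcoord z).2).
Proof. by move=> [szR szS _]; rewrite hform_hsubst. Qed.

Lemma heval_hcomp f g z : is_ratmap g -> heval (hcomp f g) z = heval f (heval g z).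
Proof.
move=> ratg; rewrite [LHS]hevalE hdeg_hcomp hnum_hcomp hden_hcomp !hform_hcomp //.
by rewrite heval_hpoint //; case: ratg.
Qed.

Lemma ratmap_hcomp f g : is_ratmap f -> is_ratmap g -> is_ratmap (hcomp f g).
Proof.
move=> [_ _ nondeg_f] ratg; have [szR szS nondeg_g] := ratg.
split; rewrite ?hdeg_hcomp ?hnum_hcomp ?hden_hcomp ?size_hsubst // => z.
rewrite !hform_hcomp //; have [l l_neq0 eAB] := hform_hpoint (nondeg_g z).
set A := hform _ (hnum g) _ _; set B := hform _ (hden g) _ _.
rewrite !eAB => -[/eqP P0 /eqP Q0]; apply: (nondeg_f (hpoint A B)).
by move: P0 Q0; rewrite !mulf_eq0 !expf_eq0 (negbTE l_neq0) !andbF => /eqP-> /eqP->.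
Qed.

Lemma critical_hcomp f g z : (0 < hdeg f)%N -> (0 < hdeg g)%N -> is_ratmap g ->
  critical (hcomp f g) z <-> critical f (heval g z) \/ critical g z.
Proof.
move=> df_gt0 dg_gt0 ratg; have [_ _ nondeg_g] := ratg.
rewrite !criticalE hjac_hcomp // hevalE -hjac_hpoint //.
split=> [/eqP|]; last by case=> ->; rewrite ?mul0r ?mulr0.
by rewrite mulf_eq0 => /orP[/eqP|/eqP]; auto.
Qed.

Lemma ratmap_hid : is_ratmap (hid C).
Proof.
split; rewrite /= ?size_polyX ?size_poly1 // => z.
rewrite -['X]expr1 -(expr0 'X) !hformXn // !expr0 expr1 mulr1 mul1r.
exact: hcoord_neq0.
Qed.

Lemma heval_hid z : heval (hid C) z = z.
Proof.
by rewrite hevalE /= -['X]expr1 -(expr0 'X) !hformXn // !expr0 !expr1 mulr1 mul1r hpoint_hcoord.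
Qed.

Lemma critical_hid z : ~ critical (hid C) z.
Proof.
rewrite criticalE /hjac /= !hform_dXE // !hform_dYE //= /dehom_dY.
rewrite derivX -(expr0 'X) derivXn /= mulr0n expr0 mulr1n mulr0 subr0 hform0.
rewrite -(expr0 'X) hformXn // !expr0 mulr1 mulr0 subr0 => /eqP.
by rewrite mulr1 oner_eq0.
Qed.

Section Iterates.
Variable f : hmap C.
Hypotheses (df_gt0 : (0 < hdeg f)%N) (ratf : is_ratmap f).

Lemma hiterS k : hiter k.+1 f = hcomp f (hiter k f).
Proof. by []. Qed.

Lemma hdeg_hiter k : hdeg (hiter k f) = (hdeg f ^ k)%N.
Proof. by elim: k => [//|k IH] /=; rewrite IH expnS. Qed.

Lemma ratmap_hiter k : is_ratmap (hiter k f).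
Proof. by elim: k => [|k IH]; [exact: ratmap_hid|exact: ratmap_hcomp]. Qed.

Lemma heval_hiter k z : heval (hiter k f) z = iter k (heval f) z.
Proof.
elim: k => [|k IH]; first exact: heval_hid.
by rewrite hiterS heval_hcomp ?IH //; apply: ratmap_hiter.
Qed.

Lemma critical_hiter k z : critical (hiter k f) z <->
  exists2 i, (i < k)%N & critical f (iter i (heval f) z).
Proof.
elim: k => [|k IH]; first by split=> [/critical_hid|[]].
have dk_gt0 : (0 < hdeg (hiter k f))%N by rewrite hdeg_hiter expn_gt0 df_gt0.
rewrite hiterS critical_hcomp //; last exact: ratmap_hiter.
rewrite heval_hiter IH; split.
  by case=> [crit|[i lt_ik crit]]; [exists k|exists i => //; apply: ltnW].
case=> i; rewrite ltnS leq_eqVlt => /orP[/eqP->|lt_ik] crit; [left|right] => //.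
by exists i.
Qed.

End Iterates.

End RationalMaps.

Section BinaryQuadraticForms.
Variable C : closedFieldType.
Implicit Types (z x : sphere C) (A B a b : C).

Definition bqf (l0 l1 l2 a b : C) := l0 * b ^+ 2 + l1 * a * b + l2 * a ^+ 2.

Lemma hform2 (p : {poly C}) a b : hform 2 p a b = bqf p`_0 p`_1 p`_2 a b.
Proof. by rewrite /hform /bqf !big_ord_recr big_ord0 /=; ring. Qed.

Lemma cross_eq0_hpoint A B x : (A, B) <> (0, 0) ->
  (hcoord x).1 * B - (hcoord x).2 * A = 0 <-> x = hpoint A B.
Proof.
move=> AB_neq0; case: x => [y|] /=; rewrite /hpoint; case: eqP => B0.
- rewrite B0; split => // h; exfalso; apply: AB_neq0; rewrite B0.
  by congr (_, _); apply/eqP; rewrite -oppr_eq0; apply/eqP; rewrite -h; ring.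
- split=> [h|[->]]; last by field; apply/eqP.
  have eA : A = y * B by apply/eqP; rewrite -subr_eq0; apply/eqP; rewrite -oppr0 -h; ring.
  by rewrite eA mulfK //; apply/eqP.
- by rewrite B0; split => // _; ring.
- by split => // h; exfalso; apply: B0; rewrite -h; ring.
Qed.

Lemma hpoint_eq A B A' B' : (A, B) <> (0, 0) -> (A', B') <> (0, 0) ->
  hpoint A B = hpoint A' B' <-> A * B' - B * A' = 0.
Proof.
move=> AB_neq0 AB'_neq0; have [l l_neq0 [eA eB]] := hcoord_hpoint AB_neq0.
move: eA eB; set w := hpoint A B; clearbody w => eA eB.
have -> : A * B' - B * A' = l * ((hcoord w).1 * B' - (hcoord w).2 * A').
  by rewrite eA eB; ring.
rewrite -cross_eq0_hpoint //; split=> [->|/eqP]; first by rewrite mulr0.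
by rewrite mulf_eq0 (negbTE l_neq0) => /eqP.
Qed.

Lemma bqf_root (l0 l1 l2 : C) : exists z, bqf l0 l1 l2 (hcoord z).1 (hcoord z).2 = 0.
Proof.
have [l2_0|l2_neq0] := eqVneq l2 0; first by exists None; rewrite /bqf /= l2_0; ring.
have [x hx] := @solve_monicpoly C 2
  (fun i => if i == 0%N then - (l0 / l2) else - (l1 / l2)) isT.
rewrite !big_ord_recr big_ord0 /= in hx.
by exists (Some x); rewrite /bqf /= hx; field.
Qed.

(* Once a root z0 is known, the form splits off the linear factor vanishing at
   z0; the cofactor is [bqf_quotX * a + bqf_quotY * b]. *)
Definition bqf_quotX (l1 l2 : C) z0 := if z0 is Some _ then l2 else - l1.
Definition bqf_quotY (l0 l1 l2 : C) z0 := if z0 is Some x then l1 + x * l2 else - l0.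
Definition bqf_coroot (l0 l1 l2 : C) z0 :=
  hpoint (bqf_quotY l0 l1 l2 z0) (- bqf_quotX l1 l2 z0).

Lemma bqf_factor (l0 l1 l2 : C) z0 : bqf l0 l1 l2 (hcoord z0).1 (hcoord z0).2 = 0 ->
  forall a b, bqf l0 l1 l2 a b = ((hcoord z0).2 * a - (hcoord z0).1 * b) *
                                 (bqf_quotX l1 l2 z0 * a + bqf_quotY l0 l1 l2 z0 * b).
Proof.
case: z0 => [x|] /= h a b; rewrite /bqf in h *.
  have -> : l0 = - (l1 * x + l2 * x ^+ 2).
    by apply/eqP; rewrite -subr_eq0; apply/eqP; rewrite -h; ring.
  by ring.
have -> : l2 = 0 by rewrite -h; ring.
by ring.
Qed.

Lemma bqf_quot_neq0 (l0 l1 l2 : C) z0 : bqf l0 l1 l2 (hcoord z0).1 (hcoord z0).2 = 0 ->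
  ~ [/\ l0 = 0, l1 = 0 & l2 = 0] ->
  (bqf_quotY l0 l1 l2 z0, - bqf_quotX l1 l2 z0) <> (0, 0).
Proof.
case: z0 => [x|] /= h nz [e1 e2]; apply: nz; rewrite /bqf in h.
  have l2_0 : l2 = 0 by apply/eqP; rewrite -oppr_eq0 e2.
  have l1_0 : l1 = 0 by rewrite -e1 l2_0; ring.
  by split => //; rewrite -h l1_0 l2_0; ring.
have l1_0 : l1 = 0 by apply/eqP; rewrite -oppr_eq0 -[- l1]opprK e2 oppr0.
have l0_0 : l0 = 0 by apply/eqP; rewrite -oppr_eq0 e1.
by split => //; rewrite -h l1_0 l0_0; ring.
Qed.

Lemma bqf_rootsP (l0 l1 l2 : C) z0 : bqf l0 l1 l2 (hcoord z0).1 (hcoord z0).2 = 0 ->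
  ~ [/\ l0 = 0, l1 = 0 & l2 = 0] -> forall z,
  bqf l0 l1 l2 (hcoord z).1 (hcoord z).2 = 0 <-> z = z0 \/ z = bqf_coroot l0 l1 l2 z0.
Proof.
move=> root0 nz z; rewrite (bqf_factor root0); have quot_neq0 := bqf_quot_neq0 root0 nz.
split.
  move/eqP; rewrite mulf_eq0 => /orP[/eqP e|/eqP e]; [left|right].
    rewrite -(hpoint_hcoord z0); apply/cross_eq0_hpoint; first exact: hcoord_neq0.
    by rewrite -e; ring.
  by apply/cross_eq0_hpoint => //; rewrite -oppr0 -e; ring.
case=> ->; first by rewrite [X in X * _](_ : _ = 0) ?mul0r //; ring.
have := iffRL (cross_eq0_hpoint (bqf_coroot l0 l1 l2 z0) quot_neq0) erefl.
rewrite -/(bqf_coroot _ _ _ _); set u := bqf_coroot _ _ _ _ => e.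
by rewrite [X in _ * X](_ : _ = 0) ?mulr0 // -oppr0 -e; ring.
Qed.

End BinaryQuadraticForms.

Section QuadraticMaps.
Variable C : closedFieldType.
Variable f : hmap C.
Hypotheses (df2 : hdeg f = 2%N) (ratf : is_ratmap f).
Implicit Types (z x : sphere C) (a b : C).

Local Notation p i := (hnum f)`_i.
Local Notation q i := (hden f)`_i.

Definition numf z := bqf (p 0) (p 1) (p 2) (hcoord z).1 (hcoord z).2.
Definition denf z := bqf (q 0) (q 1) (q 2) (hcoord z).1 (hcoord z).2.

Lemma numf_denf_neq0 z : (numf z, denf z) <> (0, 0).
Proof. by case: ratf => _ _ /(_ z); rewrite df2 !hform2. Qed.

Lemma heval_numf z : heval f z = hpoint (numf z) (denf z).
Proof. by rewrite hevalE df2 !hform2. Qed.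

Lemma forms_not_proportional s t : (s, t) <> (0, 0) ->
  ~ [/\ s * p 0 = t * q 0, s * p 1 = t * q 1 & s * p 2 = t * q 2].
Proof.
move=> st_neq0 [e0 e1 e2].
have prop w : s * numf w = t * denf w by rewrite /numf /denf /bqf !mulrDr !mulrA e0 e1 e2.
have [s0|s_neq0] := eqVneq s 0.
  have t_neq0 : t != 0 by apply/eqP => t0; apply: st_neq0; rewrite s0 t0.
  have [w num0] := bqf_root (p 0) (p 1) (p 2).
  apply: (@numf_denf_neq0 w); congr (_, _) => //.
  by move/esym/eqP: (prop w); rewrite s0 mul0r mulf_eq0 (negbTE t_neq0) => /eqP.
have [w den0] := bqf_root (q 0) (q 1) (q 2).
apply: (@numf_denf_neq0 w); congr (_, _) => //.
by move/eqP: (prop w); rewrite [denf w]den0 mulr0 mulf_eq0 (negbTE s_neq0) => /eqP.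
Qed.

(* Coefficients of the form x |-> P(x) Q(z) - Q(x) P(z), whose roots are the
   fiber of f through z. *)
Definition fibc z i := denf z * p i - numf z * q i.

(* The other point of the fiber through z. *)
Definition deck z := bqf_coroot (fibc z 0) (fibc z 1) (fibc z 2) z.

Lemma fibc_neq0 z : ~ [/\ fibc z 0 = 0, fibc z 1 = 0 & fibc z 2 = 0].
Proof.
move=> [e0 e1 e2]; apply: (@forms_not_proportional (denf z) (numf z)).
  by case=> d0 n0; apply: (@numf_denf_neq0 z); rewrite d0 n0.
by split; apply/eqP; rewrite -subr_eq0; apply/eqP.
Qed.

Lemma fiber_form_root z : bqf (fibc z 0) (fibc z 1) (fibc z 2) (hcoord z).1 (hcoord z).2 = 0.
Proof. by rewrite /fibc /numf /denf /bqf; ring. Qed.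

Lemma heval_fiber x z : heval f x = heval f z <-> x = z \/ x = deck z.
Proof.
rewrite !heval_numf hpoint_eq; try exact: numf_denf_neq0.
have -> : numf x * denf z - denf x * numf z =
          bqf (fibc z 0) (fibc z 1) (fibc z 2) (hcoord x).1 (hcoord x).2.
  by rewrite /fibc /numf /denf /bqf; ring.
exact: (bqf_rootsP (fiber_form_root z) (@fibc_neq0 z)).
Qed.

Lemma heval_surj y : exists x, heval f x = y.
Proof.
have [x root_x] := bqf_root
  ((hcoord y).2 * p 0 - (hcoord y).1 * q 0) ((hcoord y).2 * p 1 - (hcoord y).1 * q 1)
  ((hcoord y).2 * p 2 - (hcoord y).1 * q 2).
exists x; rewrite heval_numf -[RHS]hpoint_hcoord.
apply/hpoint_eq; [exact: numf_denf_neq0|exact: hcoord_neq0|].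
by rewrite -root_x /numf /denf /bqf; ring.
Qed.

Hypothesis two_neq0 : (2 : C) != 0.

Lemma hjac2E a b : hjac 2 (hnum f) (hden f) a b =
  (p 1 * b + 2 * p 2 * a) * (2 * q 0 * b + q 1 * a) -
  (2 * p 0 * b + p 1 * a) * (q 1 * b + 2 * q 2 * a).
Proof.
rewrite /hjac !hform_dXE // !hform_dYE // /hform !big_ord_recr big_ord0 /=.
rewrite !big_ord0 !coef_deriv !coef_dehom_dY //= !subn0 !subnn (_ : (2 - 1 = 1)%N) //.
by ring.
Qed.

Lemma critical2 z : critical f z <-> hjac 2 (hnum f) (hden f) (hcoord z).1 (hcoord z).2 = 0.
Proof. by rewrite criticalE df2. Qed.

(* The Jacobian at z is, up to the factor -2, the cross product of z with deck z. *)
Lemma hjac2_deck z : hjac 2 (hnum f) (hden f) (hcoord z).1 (hcoord z).2 =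
  - 2 * ((hcoord z).1 * (- bqf_quotX (fibc z 1) (fibc z 2) z)
         - (hcoord z).2 * bqf_quotY (fibc z 0) (fibc z 1) (fibc z 2) z).
Proof. by rewrite hjac2E; case: z => [x|]; rewrite /fibc /numf /denf /bqf /=; ring. Qed.

Lemma deck_fixed z : deck z = z <-> critical f z.
Proof.
have quot_neq0 := bqf_quot_neq0 (fiber_form_root z) (@fibc_neq0 z).
rewrite critical2 hjac2_deck /deck /bqf_coroot; split.
  by move=> e; rewrite (iffRL (cross_eq0_hpoint z quot_neq0) (esym e)) mulr0.
move/eqP; rewrite mulf_eq0 oppr_eq0 (negbTE two_neq0) => /eqP cross0.
by rewrite -(iffLR (cross_eq0_hpoint z quot_neq0) cross0).
Qed.

Lemma hjac2_bqf a b : hjac 2 (hnum f) (hden f) a b =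
  bqf (2 * (p 1 * q 0 - p 0 * q 1)) (2 * 2 * (p 2 * q 0 - p 0 * q 2))
      (2 * (p 2 * q 1 - p 1 * q 2)) a b.
Proof. by rewrite hjac2E /bqf; ring. Qed.

Lemma hjac2_neq0 : ~ [/\ 2 * (p 1 * q 0 - p 0 * q 1) = 0,
  2 * 2 * (p 2 * q 0 - p 0 * q 2) = 0 & 2 * (p 2 * q 1 - p 1 * q 2) = 0].
Proof.
move=> [/eqP e0 /eqP e1 /eqP e2]; move: e0 e1 e2.
rewrite !mulf_eq0 (negbTE two_neq0) /= !subr_eq0 => /eqP m01 /eqP m02 /eqP m12.
have [q0_0|q0_neq0] := eqVneq (q 0) 0; last first.
  apply: (@forms_not_proportional (q 0) (p 0)); first by move=> [] /eqP; rewrite (negbTE q0_neq0).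
  by split; [rewrite mulrC|rewrite -m01 mulrC|rewrite -m02 mulrC].
have [q1_0|q1_neq0] := eqVneq (q 1) 0; last first.
  apply: (@forms_not_proportional (q 1) (p 1)); first by move=> [] /eqP; rewrite (negbTE q1_neq0).
  by split; [rewrite m01 mulrC|rewrite mulrC|rewrite -m12 mulrC].
have [q2_0|q2_neq0] := eqVneq (q 2) 0; last first.
  apply: (@forms_not_proportional (q 2) (p 2)); first by move=> [] /eqP; rewrite (negbTE q2_neq0).
  by split; [rewrite m02 mulrC|rewrite m12 mulrC|rewrite mulrC].
apply: (@forms_not_proportional 0 1); first by move/(congr1 snd) => /= /eqP; rewrite oner_eq0.
by rewrite q0_0 q1_0 q2_0 !mul0r !mulr0.
Qed.

Lemma critical_two c1 c2 z : c1 <> c2 -> critical f c1 -> critical f c2 ->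
  critical f z -> z = c1 \/ z = c2.
Proof.
rewrite !critical2 !hjac2_bqf => c12 crit1 crit2 critz.
have := iffLR (bqf_rootsP crit1 hjac2_neq0 c2) crit2.
case=> [e|->]; first by case: c12.
exact: (iffLR (bqf_rootsP crit1 hjac2_neq0 z) critz).
Qed.

End QuadraticMaps.

Lemma has_exactly_size (T : eqType) n (P : T -> Prop) (s : seq T) :
  uniq s -> (forall x, P x <-> x \in s) -> has_exactly n P <-> n = size s.
Proof.
move=> uniq_s Ps; split=> [[s' [uniq_s' <- Ps']]|->]; last by exists s.
apply: perm_size; apply: uniq_perm => // x.
by apply/idP/idP => [/Ps'/Ps|/Ps/Ps'].
Qed.

Lemma has_exactly_eq (T : eqType) n (P Q : T -> Prop) :
  (forall x, P x <-> Q x) -> has_exactly n P <-> has_exactly n Q.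
Proof.
by move=> PQ; split=> -[s [uniq_s size_s Ps]]; exists s; split=> // x; rewrite -Ps PQ.
Qed.

Local Close Scope ring_scope.

Lemma uniq_flatten_map (S T : eqType) (s : seq S) (A : S -> seq T) :
  uniq s -> (forall w, w \in s -> uniq (A w)) ->
  (forall w w' x, w \in s -> w' \in s -> x \in A w -> x \in A w' -> w = w') ->
  uniq (flatten [seq A w | w <- s]).
Proof.
elim: s => [//|w s IH] /= /andP[w_notin_s uniq_s] uniqA disjA.
rewrite cat_uniq uniqA ?mem_head // IH //; last first.
- by move=> a b x ha hb; apply: disjA; rewrite inE ?ha ?hb orbT.
- by move=> a ha; apply: uniqA; rewrite inE ha orbT.
rewrite andbT; apply/hasPn => x /flatten_mapP[w' w'_in_s x_in]; apply/negP => x_in'.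
have w_eq : w = w' by apply: disjA x_in' x_in; rewrite ?mem_head // inE w'_in_s orbT.
by move: w_notin_s; rewrite w_eq w'_in_s.
Qed.

Lemma sum_indicator_eq k i0 (c : nat -> nat) :
  \sum_(0 <= i < k) ((i == i0) * c i) = (i0 < k) * c i0.
Proof.
rewrite (eq_bigr (fun i => if i == i0 then c i else 0)) => [|i _]; last first.
  by case: (i == i0); rewrite ?mul1n ?mul0n.
by rewrite -big_mkcond big_nat1_eq /=; case: (i0 < k); rewrite ?mul1n ?mul0n.
Qed.

Lemma sum_indicator_lt k n (c : nat -> nat) : n <= k ->
  \sum_(0 <= i < k) ((i < n) * c i) = \sum_(0 <= i < n) c i.
Proof.
move=> le_nk; rewrite (big_cat_nat (leq0n n) le_nk) /= [X in _ + X]big1_seq ?addn0.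
  by apply: eq_big_nat => i /andP[_ ->]; rewrite mul1n.
by move=> i /andP[_]; rewrite mem_index_iota => /andP[/leq_gtF->].
Qed.

Lemma sum_pow2 n : (\sum_(0 <= i < n) 2 ^ i).+1 = 2 ^ n.
Proof.
elim: n => [|n IH]; first by rewrite big_geq.
by rewrite big_nat_recr //= -addSn IH expnS; lia.
Qed.

Section DoubleCovers.
Variables (T : choiceType) (F deck : T -> T) (c1 c2 : T).
Hypotheses (F_fiber : forall x z, F x = F z <-> x = z \/ x = deck z)
           (deck_fixed : forall z, deck z = z <-> z = c1 \/ z = c2)
           (F_surj : forall y, exists x, F x = y).

Let F_surjb y : exists x, F x == y.
Proof. by have [x <-] := F_surj y; exists x. Qed.

Definition preim y := let x := xchoose (F_surjb y) in
  if deck x == x then [:: x] else [:: x; deck x].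

Lemma mem_preim w y : (w \in preim y) = (F w == y).
Proof.
rewrite /preim; set x := xchoose _; have /eqP Fx : F x == y := xchooseP (F_surjb y).
have -> : (F w == y) = (w == x) || (w == deck x).
  rewrite -Fx; apply/eqP/orP => [/F_fiber[]->|]; rewrite ?eqxx; auto.
  by case=> /eqP->; apply/F_fiber; auto.
by case: eqP => [->|_]; rewrite !inE ?orbb.
Qed.

Lemma uniq_preim y : uniq (preim y).
Proof. by rewrite /preim; case: eqP => //= /eqP; rewrite inE eq_sym andbT. Qed.

Lemma size_preim y : y != F c1 -> y != F c2 -> size (preim y) = 2.
Proof.
rewrite /preim; set x := xchoose _; have /eqP <- : F x == y := xchooseP (F_surjb y).
by move=> neq1 neq2; case: eqP => // /deck_fixed[] eq_x; rewrite eq_x eqxx in neq1 neq2.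
Qed.

Fixpoint preimn n y := if n is n'.+1 then flatten [seq preim w | w <- preimn n' y] else [:: y].

Lemma mem_preimn n x y : (x \in preimn n y) = (iter n F x == y).
Proof.
elim: n x => [|n IH] x /=; first by rewrite inE.
apply/flatten_mapP/eqP => [[w]|Fnx].
  by rewrite IH mem_preim -iterS iterSr => /eqP<- /eqP->.
by exists (F x); rewrite ?mem_preim // IH -iterSr iterS Fnx.
Qed.

Lemma uniq_preimn n y : uniq (preimn n y).
Proof.
elim: n => [//|n IH] /=; apply: uniq_flatten_map => // [w _|w w' x _ _].
  exact: uniq_preim.
by rewrite !mem_preim => /eqP<- /eqP.
Qed.

Lemma size_preimn n y :
  (forall j x, j < n -> iter j F x = y -> x <> F c1 /\ x <> F c2) ->
  size (preimn n y) = 2 ^ n.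
Proof.
elim: n => [//|n IH] noncrit /=.
rewrite size_flatten /shape -map_comp.
have -> : [seq (size \o preim) w | w <- preimn n y] = [seq 2 | w <- preimn n y].
  apply/eq_in_map => w; rewrite mem_preimn => /eqP Fnw /=.
  by have [? ?] := noncrit n w (ltnSn n) Fnw; rewrite size_preim //; apply/eqP.
have -> : sumn [seq 2 | w <- preimn n y] = 2 * size (preimn n y).
  by elim: (preimn n y) => //= w s ->; rewrite mulnS.
rewrite IH ?expnS // => j x lt_jn; apply: noncrit; exact: ltnW.
Qed.

Section PostcriticalOrbit.
Variables (alpha : T) (m k : nat).
Hypotheses (v12 : F c1 <> F c2) (Fv12 : F (F c1) = F (F c2))
           (alpha_fixed : F alpha = alpha) (beta_m : iter m F (F c1) = alpha)
           (beta_lt_m : forall j, j < m -> iter j F (F c1) <> alpha)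
           (m_gt2 : 2 < m) (m_lt_k : m < k).

Local Notation v1 := (F c1).
Local Notation v2 := (F c2).
Local Notation beta j := (iter j F v1).

Lemma iter_fixed j : iter j F alpha = alpha.
Proof. by elim: j => //= j ->. Qed.

Lemma beta_ge n : m <= n -> beta n = alpha.
Proof. by move=> le_mn; rewrite -(subnK le_mn) iterD beta_m iter_fixed. Qed.

(* Since alpha is fixed, a repetition in the orbit of v1 can only happen after
   it has reached alpha. *)
Lemma beta_repeat s t : s < t -> beta s = beta t -> m <= s.
Proof.
move=> lt_st eq_st; set d := t - s.
have periodic N : beta (s + N * d) = beta s.
  elim: N => [|N IH]; first by rewrite addn0.
  by rewrite mulSn addnCA iterD IH -iterD subnK // ltnW.
have d_gt0 : 0 < d by rewrite subn_gt0.
rewrite leqNgt; apply/negP => lt_sm; apply: (beta_lt_m lt_sm).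
by rewrite -(periodic m) beta_ge //; nia.
Qed.

Lemma eq_beta s t : s < m -> (beta s == beta t) = (s == t).
Proof.
move=> lt_sm; case: (ltngtP s t) => [lt_st|lt_ts|->]; rewrite ?eqxx //.
  by apply/negbTE/eqP => /(beta_repeat lt_st); rewrite leqNgt lt_sm.
apply/negbTE/eqP => /esym/(beta_repeat lt_ts) le_mt.
by have := leq_trans le_mt (ltnW lt_ts); rewrite leqNgt lt_sm.
Qed.

Lemma iter_v2 j : 0 < j -> iter j F v2 = beta j.
Proof. by case: j => // j _; rewrite !iterSr Fv12. Qed.

Lemma beta_neq_v2 t : beta t <> v2.
Proof.
case: t => [/= |t eq_t]; first exact: v12.
have := @beta_repeat 1 t.+2 isT; rewrite [iter t.+2 _ _]iterS eq_t -Fv12 leqNgt => /(_ erefl).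
by rewrite (ltn_trans _ m_gt2).
Qed.

Lemma postcritical_noncritical j c : c = c1 \/ c = c2 -> beta j <> c /\ iter j F v2 <> c.
Proof.
have beta_noncrit t : beta t <> c1 /\ beta t <> c2.
  split=> eq_t; last by apply: (@beta_neq_v2 t.+1); rewrite iterS eq_t.
  have := @beta_repeat 0 t.+1 isT; rewrite iterS eq_t leqNgt => /(_ erefl).
  by rewrite (ltn_trans _ m_gt2).
move=> crit_c; split; first by case: crit_c => ->; apply beta_noncrit.
case: j => [|j]; last by rewrite iter_v2 //; case: crit_c => ->; apply beta_noncrit.
case: crit_c => -> /= eq_v2; last by apply: (@beta_neq_v2 1); rewrite /= Fv12 eq_v2.
have := @beta_repeat 0 1 isT; rewrite /= Fv12 eq_v2 leqNgt => /(_ erefl).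
by rewrite (ltn_trans _ m_gt2).
Qed.

Lemma iterS_critical_neq d c c' : c = c1 \/ c = c2 -> c' = c1 \/ c' = c2 ->
  iter d.+1 F c <> c'.
Proof.
move=> crit_c crit_c'; rewrite iterSr.
by case: crit_c => ->; have [] := postcritical_noncritical d crit_c'.
Qed.

Lemma size_preimn_critical i c : c = c1 \/ c = c2 -> size (preimn i c) = 2 ^ i.
Proof.
move=> crit_c; apply: size_preimn => j x _ eq_x.
have [beta_neq orbit_v2_neq] := postcritical_noncritical j crit_c.
by split=> eq_v; [apply: beta_neq|apply: orbit_v2_neq]; rewrite -eq_v.
Qed.

Lemma critical_hit_unique i i' x c c' : c = c1 \/ c = c2 -> c' = c1 \/ c' = c2 ->
  iter i F x = c -> iter i' F x = c' -> i = i'.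
Proof.
move=> crit_c crit_c' eq_c eq_c'; case: (ltngtP i i') => // lt_ii'; exfalso.
  apply: (@iterS_critical_neq (i' - i).-1 _ _ crit_c crit_c').
  by rewrite prednK ?subn_gt0 // -eq_c -iterD subnK // ltnW.
apply: (@iterS_critical_neq (i - i').-1 _ _ crit_c' crit_c).
by rewrite prednK ?subn_gt0 // -eq_c' -iterD subnK // ltnW.
Qed.

Definition hits_critical x := exists2 i, i < k & (iter i F x = c1 \/ iter i F x = c2).

(* The critical points of F^k over y, sorted by the time i at which they hit
   a critical point. *)
Definition critfib_block y i :=
  (if iter (k - i) F c1 == y then preimn i c1 else [::]) ++
  (if iter (k - i) F c2 == y then preimn i c2 else [::]).

Definition critfib y := flatten [seq critfib_block y i | i <- iota 0 k].

Lemma mem_critfib_block y i x : (x \in critfib_block y i) =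
  ((iter (k - i) F c1 == y) && (iter i F x == c1)) ||
  ((iter (k - i) F c2 == y) && (iter i F x == c2)).
Proof.
by rewrite /critfib_block mem_cat; do 2!case: ifP => _; rewrite /= ?mem_preimn ?in_nil ?orbF.
Qed.

Lemma mem_critfib y x : x \in critfib y <-> hits_critical x /\ iter k F x = y.
Proof.
split.
  case/flatten_mapP=> i; rewrite mem_iota add0n => /andP[_ lt_ik].
  rewrite -(subnK (ltnW lt_ik)) iterD mem_critfib_block.
  by case/orP=> /andP[/eqP<- /eqP eq_c]; rewrite eq_c; split=> //; exists i; auto.
move=> [[i lt_ik crit] <-]; apply/flatten_mapP; exists i; first by rewrite mem_iota.
rewrite -(subnK (ltnW lt_ik)) iterD mem_critfib_block.
by case: crit => ->; rewrite !eqxx ?orbT.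
Qed.

Lemma uniq_critfib y : uniq (critfib y).
Proof.
apply: uniq_flatten_map => [|i _|i i' x _ _]; first exact: iota_uniq.
  rewrite /critfib_block; do 2!case: ifP => _; rewrite ?cats0 ?cat0s ?uniq_preimn //.
  rewrite cat_uniq !uniq_preimn andbT /=; apply/hasPn => x; rewrite !mem_preimn => /eqP->.
  by apply/eqP => /esym eq_c; apply: v12; rewrite eq_c.
rewrite !mem_critfib_block.
by case/orP=> /andP[_ /eqP eq_c] /orP[|] /andP[_ /eqP eq_c'];
  apply: (critical_hit_unique _ _ eq_c eq_c'); auto.
Qed.

Definition critfib_weight y i :=
  ((iter (k - i) F c1 == y) + (iter (k - i) F c2 == y)) * 2 ^ i.

Lemma size_critfib y : size (critfib y) = \sum_(0 <= i < k) critfib_weight y i.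
Proof.
rewrite size_flatten /shape -map_comp sumnE big_map /index_iota subn0.
apply: eq_bigr => i _ /=; rewrite /critfib_block /critfib_weight size_cat mulnDl.
by congr (_ + _); case: eqP => _; rewrite ?size_preimn_critical ?mul1n; auto.
Qed.

Lemma critfib_weightE y i : i < k -> critfib_weight y i =
  ((beta (k - i.+1) == y) + (if i.+1 < k then beta (k - i.+1) == y else v2 == y)) * 2 ^ i.
Proof.
move=> lt_ik; rewrite /critfib_weight.
have -> : k - i = (k - i.+1).+1 by lia.
rewrite !iterSr; congr ((_ + _) * _).
by case: ifP => lt_i1k; [rewrite iter_v2 // subn_gt0|have -> : k - i.+1 = 0 by lia].
Qed.

Let k_gt2 : 2 < k := ltn_trans m_gt2 m_lt_k.

Lemma beta_eq_v1 t : (beta t == v1) = (t == 0).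
Proof. by rewrite -[X in _ == X]/(beta 0) eq_sym eq_beta ?(ltn_trans _ m_gt2) // eq_sym. Qed.

Lemma beta_eq_v2 t : (beta t == v2) = false.
Proof. exact/negbTE/eqP/beta_neq_v2. Qed.

Lemma beta_eq_alpha t : (beta t == alpha) = (m <= t).
Proof.
by case: leqP => [le_mt|/beta_lt_m neq]; [rewrite beta_ge ?eqxx|apply/negbTE/eqP].
Qed.

Lemma size_critfib_v1 : size (critfib v1) = 2 ^ (k - 1).
Proof.
rewrite size_critfib (eq_big_nat _ _ (F2 := fun i => (i == k.-1) * 2 ^ i)).
  by rewrite sum_indicator_eq ltn_predL (ltn_trans _ k_gt2) // mul1n subn1.
move=> i /andP[_ lt_ik]; rewrite critfib_weightE // beta_eq_v1.
case: ifP => lt_i1k.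
  have -> : (k - i.+1 == 0) = false by apply/negbTE; rewrite -lt0n subn_gt0.
  by have -> : (i == k.-1) = false by apply/negbTE; lia.
have -> : (v2 == v1) = false by apply/negbTE/eqP => /esym.
have -> : k - i.+1 = 0 by lia.
by have -> : i == k.-1 by apply/eqP; lia.
Qed.

Lemma size_critfib_v2 : size (critfib v2) = 2 ^ (k - 1).
Proof.
rewrite size_critfib (eq_big_nat _ _ (F2 := fun i => (i == k.-1) * 2 ^ i)).
  by rewrite sum_indicator_eq ltn_predL (ltn_trans _ k_gt2) // mul1n subn1.
move=> i /andP[_ lt_ik]; rewrite critfib_weightE // beta_eq_v2 eqxx.
by case: ifP => lt_i1k; [have -> : (i == k.-1) = false|have -> : i == k.-1];
   rewrite // ?(eq_sym v2) ?beta_eq_v2; apply/eqP; lia.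
Qed.

(* Only the time k - j - 1 contributes, once for each critical point. *)
Lemma size_critfib_beta j : 0 < j < m -> size (critfib (beta j)) = 2 ^ (k - j).
Proof.
move=> /andP[j_gt0 lt_jm]; have lt_jk := ltn_trans lt_jm m_lt_k.
rewrite size_critfib (eq_big_nat _ _ (F2 := fun i => (i == k - j.+1) * 2 ^ (i.+1))).
  rewrite sum_indicator_eq (_ : k - j.+1 < k); last by lia.
  by rewrite mul1n; congr (_ ^ _); lia.
move=> i /andP[_ lt_ik]; rewrite critfib_weightE // eq_sym eq_beta //.
have -> : (j == k - i.+1) = (i == k - j.+1) by apply/eqP/eqP; lia.
case: ifP => lt_i1k; first by case: (i == _); rewrite ?mul1n // expnS.
by rewrite (eq_sym v2) beta_eq_v2 (_ : i == k - j.+1 = false) //; apply/negbTE; lia.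
Qed.

Lemma size_critfib_alpha : size (critfib alpha) = 2 ^ (k - (m - 1)) - 2.
Proof.
rewrite size_critfib (eq_big_nat _ _ (F2 := fun i => (i < k - m) * 2 ^ i.+1)).
  rewrite sum_indicator_lt ?leq_subr //.
  have := sum_pow2 (k - m).+1; rewrite big_nat_recl //= expn0.
  have -> : k - (m - 1) = (k - m).+1 by lia.
  by set s := \sum_(0 <= i < k - m) _; lia.
move=> i /andP[_ lt_ik]; rewrite critfib_weightE // beta_eq_alpha.
have -> : (m <= k - i.+1) = (i < k - m) by apply/idP/idP; lia.
case: ifP => lt_i1k; first by case: (i < _); rewrite ?mul1n // expnS.
by rewrite -beta_m (eq_sym v2) beta_eq_v2 (_ : i < k - m = false) //; apply/negbTE; lia.
Qed.

(* Away from v1, v2 and beta 1, the times k - 1 and k - 2 do not contribute. *)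
Lemma size_critfib_lt y : y <> v1 -> y <> v2 -> y <> beta 1 ->
  size (critfib y) < 2 ^ (k - 1).
Proof.
move=> neq_v1 neq_v2 neq_beta1; rewrite size_critfib.
apply: (@leq_ltn_trans (\sum_(0 <= i < k) ((i < k - 2) * 2 ^ i.+1))).
  rewrite big_nat_cond [X in _ <= X]big_nat_cond.
  apply: leq_sum => i /andP[/andP[_ lt_ik] _]; rewrite critfib_weightE //.
  case: (ltngtP i (k - 2)) => cmp_i.
  - rewrite mul1n expnS leq_mul2r; apply/orP; right.
    by rewrite -(addn1 1) leq_add ?leq_b1.
  - have -> : i = k.-1 by lia.
    have -> : k - k.-1.+1 = 0 by lia.
    rewrite prednK ?ltnn /=; last exact: ltn_trans k_gt2.
    have -> : (v1 == y) = false by apply/negbTE/eqP => /esym.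
    by have -> : (v2 == y) = false by apply/negbTE/eqP => /esym.
  - have -> : k - i.+1 = 1 by lia.
    have -> : i.+1 < k by lia.
    by have -> : (beta 1 == y) = false by apply/negbTE/eqP => /esym.
rewrite sum_indicator_lt ?leq_subr //.
have := sum_pow2 (k - 2).+1; rewrite big_nat_recl //= expn0.
have -> : k - 1 = (k - 2).+1 by lia.
by set s := \sum_(0 <= i < k - 2) _; lia.
Qed.

Theorem critical_fiber_counts :
  [/\ forall y, has_exactly (2 ^ (k - 1)) (fun x => hits_critical x /\ iter k F x = y)
                <-> [\/ y = v1, y = v2 | y = F v1],
      forall j, 2 <= j <= m - 1 ->
        has_exactly (2 ^ (k - j)) (fun x => hits_critical x /\ iter k F x = beta j) &
      has_exactly (2 ^ (k - (m - 1)) - 2) (fun x => hits_critical x /\ iter k F x = alpha)].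
Proof.
have critfibP y : forall x, hits_critical x /\ iter k F x = y <-> x \in critfib y.
  by move=> x; rewrite mem_critfib.
split=> [y|j /andP[j_ge2 le_jm]|]; rewrite (has_exactly_size _ (uniq_critfib _) (critfibP _)).
- split=> [size_y|]; last case=> ->.
  + have [->|neq_v1] := eqVneq y v1; first by constructor 1.
    have [->|neq_v2] := eqVneq y v2; first by constructor 2.
    have [->|neq_beta1] := eqVneq y (F v1); first by constructor 3.
    have := size_critfib_lt (elimN eqP neq_v1) (elimN eqP neq_v2) (elimN eqP neq_beta1).
    by rewrite -size_y ltnn.
  + by rewrite size_critfib_v1.
  + by rewrite size_critfib_v2.
  + by rewrite (@size_critfib_beta 1) // (ltn_trans _ m_gt2).
- by rewrite size_critfib_beta //; apply/andP; split; lia.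
- by rewrite size_critfib_alpha.
Qed.

End PostcriticalOrbit.

End DoubleCovers.

Local Open Scope ring_scope.

Theorem mainTheorem19 (R : realType) (f : hmap (complex R))
  (c1 c2 v1 v2 alpha : sphere (complex R)) (m k : nat) :
  is_quadratic f ->
  c1 <> c2 -> critical f c1 -> critical f c2 ->
  v1 = heval f c1 -> v2 = heval f c2 -> v1 <> v2 ->
  heval f v1 = heval f v2 ->
  heval f alpha = alpha ->
  iter m (heval f) v1 = alpha ->
  (forall j, (j < m)%N -> iter j (heval f) v1 <> alpha) ->
  (2 < m)%N -> (m < k)%N ->
  [/\ (forall z : sphere (complex R),
         has_exactly (2 ^ (k - 1))
           (fun x => critical (hiter k f) x /\ iter k (heval f) x = z)
         <-> [\/ z = v1, z = v2 | z = heval f v1]),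
      (forall j, (2 <= j <= m - 1)%N ->
         has_exactly (2 ^ (k - j))
           (fun x => critical (hiter k f) x /\
                     iter k (heval f) x = iter j (heval f) v1)) &
      has_exactly (2 ^ (k - (m - 1)) - 2)
        (fun x => critical (hiter k f) x /\ iter k (heval f) x = alpha)].
Proof.
move=> [df2 ratf] c12 crit1 crit2 -> -> v12 Fv12 alpha_fixed beta_m beta_lt_m m_gt2 m_lt_k.
have two_neq0 : (2 : complex R) != 0 by rewrite pnatr_eq0.
have criticalP w : critical f w <-> w = c1 \/ w = c2.
  split=> [critw|[]->]; [|exact: crit1|exact: crit2].
  by have := critical_two df2 ratf two_neq0 c12 crit1 crit2 critw.
have deck_fixedP w : deck f w = w <-> w = c1 \/ w = c2.
  by rewrite (deck_fixed df2 ratf two_neq0) criticalP.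
have df_gt0 : (0 < hdeg f)%N by rewrite df2.
have hitsP y x : critical (hiter k f) x /\ iter k (heval f) x = y <->
                 hits_critical (heval f) c1 c2 k x /\ iter k (heval f) x = y.
  rewrite (critical_hiter df_gt0 ratf).
  by split=> -[[i lt_ik crit] eq_y]; (split; last exact: eq_y); exists i;
    [exact: lt_ik|exact/criticalP|exact: lt_ik|exact/criticalP].
have [count_v count_beta count_alpha] := critical_fiber_counts (heval_fiber df2 ratf)
  deck_fixedP (heval_surj df2 ratf) v12 Fv12 alpha_fixed beta_m beta_lt_m m_gt2 m_lt_k.
split=> [z|j j_range|]; rewrite (has_exactly_eq _ (hitsP _)).
- exact: count_v.
- exact: count_beta.
- exact: count_alpha.
Qed.
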